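(* Let $\Lambda$ be a predicate on arguments of function symbols. Every standard TSS $P=(\Sigma,R)$ in decent ntyft format that is manifestly delay resistant w.r.t. $\Lambda$ is manifestly $\tau$-pollable w.r.t. $\Lambda$. (In particular, taking $\Lambda=\emptyset$: every manifestly delay resistant standard TSS in decent ntyft format is manifestly $\tau$-pollable.)
   Context: Actions $A\cup\{\tau\}$, $\tau\notin A$; $\alpha,\beta,\gamma$ range over them. Signature $\Sigma$, infinite variables $V$. Literals $t\xrightarrow{\alpha}u$, $t\not\xrightarrow{\alpha}$; rule $\frac{H}{\lambda}$ with source the left term of $\lambda$; standard if $\lambda$ positive. $H^+$ positive premises. Irredundant proof of $\frac{H}{\lambda}$ from $P$: well-founded literal tree, some leaves marked hypothesis, root $\lambda$, $H$ exactly the hypothesis labels, other nodes $\mu$ with children labels $K$ such that $\frac{K}{\mu}$ is a substitution instance of a rule of $P$; linear if no two hypotheses carry the same positive literal. ntytt: right-hand sides of positive premises distinct variables not in the source; ntyft: ntytt with source $f(x_1,\dots,x_{ar(f)})$, distinct variables. Free variable: not in source nor in premise right-hand sides; lookahead: a variable in both a premise right-hand side and a premise left-hand side; decent: neither. For a predicate $\Gamma$ on pairs $(f,i)$, an occurrence of $x$ in $t$ is $\Lambda$-liquid if $t=x$, or $t=f(t_1,\dots,t_n)$, the occurrence is in $t_i$ with $\Lambda(f,i)$ and is $\Lambda$-liquid in $t_i$. For a rule with source $t$, a premise with left-hand side $w$ is $\Lambda$-liquid if all variables of $w$ occur in $t$, only $\Lambda$-liquid; $H^\Lambda$ is the set of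 these premises. $\overline R$: rules of $R$ up to bijective renaming of variables. For an ntytt rule with premises $H$ and $M\subseteq H^+$: $M_\tau=\{w\xrightarrow{\tau}z_y\mid(w\xrightarrow{\beta}y)\in M\}$, $z_y$ distinct fresh variables. For ntytt $\frac{H}{t\xrightarrow{\alpha}u}$: a premise $w\xrightarrow{\beta}y$ is manifestly delayable in $P$ if for some term $v$ and fresh $z$ there are $\frac{H_1}{t\xrightarrow{\tau}v}\in\overline R$ and an ntytt rule $\frac{H_2}{v\xrightarrow{\alpha}u}$ linearly provable from $P$ with $H_1\subseteq(H\setminus\{w\xrightarrow{\beta}y\})\cup\{w\xrightarrow{\tau}z\}$, $H_2\subseteq(H\setminus\{w\xrightarrow{\beta}y\})\cup\{z\xrightarrow{\beta}y\}$. The rule is negative-stable if for every premise $w\not\xrightarrow{\gamma}$ also $w\not\xrightarrow{\tau}\in H$; manifestly delay resistant w.r.t. $\Lambda$ and $P$ if negative-stable and there is a finite $H^d\subseteq H^+$ of manifestly delayable premises such that for each $M\subseteq H^+\setminus(H^d\cup H^\Lambda)$ some $\frac{H_M}{t\xrightarrow{\alpha}u}\in\overline R$ has $H_M\subseteq(H\setminus M)\cup M_\tau$. A standard TSS in decent ntyft format is manifestly delay resistant w.r.t. $\Lambda$ if all its rules are manifestly delay resistant w.r.t. $\Lambda$ and itself. A TSS $P=(\Sigma,R)$ in ntytt format is manifestly $\tau$-pollable w.r.t. $\Lambda$ if for each rule $\frac{H}{t\not\xrightarrow{\alpha}}$ or $\frac{H}{t\xrightarrow{\alpha}u}$ in $R$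 and each $M\subseteq H^+\setminus H^\Lambda$, $\overline R$ contains a rule $\frac{H_M}{t\not\xrightarrow{\alpha}}$, resp. $\frac{H_M}{t\xrightarrow{\alpha}u}$ or $\frac{H_M}{t\xrightarrow{\tau}w}$ for some term $w$, with $H_M\subseteq(H\setminus M)\cup M_\tau$. *)

From Stdlib Require Import List.
From Stdlib Require Fin.




Section TSS.

Variable Act : Type.
Variable tau : Act.
Variable F : Type.
Variable ar : F -> nat.
Variable V : Type.

Inductive term : Type :=
| Var (x : V)
| App (f : F) (args : Fin.t (ar f) -> term).

Fixpoint subst (s : V -> term) (t : term) : term :=
  match t with
  | Var x => s x
  | App f a => App f (fun i => subst s (a i))
  end.

Fixpoint occurs (x : V) (t : term) : Prop :=
  match t with
  | Var y => x = y
  | App f a => exists i, occurs x (a i)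
  end.

Inductive lit : Type :=
| Pos (t : term) (a : Act) (u : term)
| Neg (t : term) (a : Act).

Definition is_pos (l : lit) : Prop :=
  match l with Pos _ _ _ => True | Neg _ _ => False end.

Definition lhs (l : lit) : term :=
  match l with Pos t _ _ => t | Neg t _ => t end.

Definition subst_lit (s : V -> term) (l : lit) : lit :=
  match l with
  | Pos t a u => Pos (subst s t) a (subst s u)
  | Neg t a => Neg (subst s t) a
  end.

Definition occurs_lit (x : V) (l : lit) : Prop :=
  match l with
  | Pos t _ u => occurs x t \/ occurs x u
  | Neg t _ => occurs x t
  end.

(* A rule H/λ is given by a set of premises H (a predicate on literals) and a
   conclusion λ; a TSS (Σ,R) is given by the set R of its rules. *)
Definition premises := lit -> Prop.
Definition tss := premises -> lit -> Prop.

Definition vars_rule (H : premises) (c : lit) (x : V) : Prop :=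
  occurs_lit x c \/ exists l, H l /\ occurs_lit x l.

Definition bijective (p : V -> V) : Prop :=
  exists q : V -> V, (forall x, q (p x) = x) /\ (forall y, p (q y) = y).

Definition Rbar (R : tss) (H : premises) (c : lit) : Prop :=
  exists H0 c0 (p : V -> V),
    R H0 c0 /\ bijective p /\
    c = subst_lit (fun x => Var (p x)) c0 /\
    (forall l, H l <-> exists l0, H0 l0 /\ l = subst_lit (fun x => Var (p x)) l0).

Definition rhs_var (H : premises) (y : V) : Prop :=
  exists w b, H (Pos w b (Var y)).

Definition lhs_var (H : premises) (x : V) : Prop :=
  exists l, H l /\ occurs x (lhs l).

Definition ntytt (H : premises) (c : lit) : Prop :=
  (forall w b y, H (Pos w b y) -> exists v, y = Var v /\ ~ occurs v (lhs c)) /\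
  (forall w b w' b' v, H (Pos w b (Var v)) -> H (Pos w' b' (Var v)) -> w = w' /\ b = b').

Definition ntyft (H : premises) (c : lit) : Prop :=
  ntytt H c /\
  exists (f : F) (xs : Fin.t (ar f) -> V),
    (forall i j, xs i = xs j -> i = j) /\ lhs c = App f (fun i => Var (xs i)).

Definition decent (H : premises) (c : lit) : Prop :=
  (forall x, vars_rule H c x -> occurs x (lhs c) \/ rhs_var H x) /\
  (forall x, ~ (rhs_var H x /\ lhs_var H x)).

Definition standard_decent_ntyft (R : tss) : Prop :=
  forall H c, R H c -> is_pos c /\ ntyft H c /\ decent H c.

(* Proofs: well-founded literal trees; [Hyp l] is a leaf marked hypothesis. *)
Inductive ptree : Type :=
| Hyp (l : lit)
| Node (l : lit) (I : Type) (ch : I -> ptree).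

Definition label (p : ptree) : lit :=
  match p with Hyp l => l | Node l _ _ => l end.

Fixpoint hyps (p : ptree) : lit -> Prop :=
  match p with
  | Hyp l => fun k => k = l
  | Node _ Ix ch => fun k => exists i, hyps (ch i) k
  end.

Fixpoint valid (R : tss) (p : ptree) : Prop :=
  match p with
  | Hyp _ => True
  | Node l Ix ch =>
      (exists H0 c0 (s : V -> term),
          R H0 c0 /\ l = subst_lit s c0 /\
          (forall k, (exists i, label (ch i) = k) <-> exists l0, H0 l0 /\ k = subst_lit s l0)) /\
      (forall i, valid R (ch i))
  end.

Fixpoint linear (p : ptree) : Prop :=
  match p with
  | Hyp _ => True
  | Node _ Ix ch =>
      (forall i, linear (ch i)) /\
      (forall i j, i <> j -> forall t a u,
          hyps (ch i) (Pos t a u) -> hyps (ch j) (Pos t a u) -> False)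
  end.

Definition linearly_provable (R : tss) (H : premises) (c : lit) : Prop :=
  exists p, valid R p /\ linear p /\ label p = c /\ (forall l, hyps p l <-> H l).

Variable Lam : forall f : F, Fin.t (ar f) -> Prop.

Fixpoint all_liquid (x : V) (t : term) : Prop :=
  match t with
  | Var _ => True
  | App f a => forall i, (occurs x (a i) -> Lam f i) /\ all_liquid x (a i)
  end.

Definition HLam (H : premises) (c : lit) (l : lit) : Prop :=
  H l /\ forall x, occurs x (lhs l) -> occurs x (lhs c) /\ all_liquid x (lhs c).

(* M_τ with an admissible choice zf of distinct fresh variables z_y *)
Definition Mtau (M : premises) (zf : V -> V) (l : lit) : Prop :=
  exists w b y, M (Pos w b (Var y)) /\ l = Pos w tau (Var (zf y)).

Definition admissible (H : premises) (c : lit) (M : premises) (zf : V -> V) : Prop :=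
  (forall y y', rhs_var M y -> rhs_var M y' -> zf y = zf y' -> y = y') /\
  (forall y, rhs_var M y -> ~ vars_rule H c (zf y)).

Definition polled (H M : premises) (zf : V -> V) (l : lit) : Prop :=
  (H l /\ ~ M l) \/ Mtau M zf l.

Definition subset (A B : premises) : Prop := forall l, A l -> B l.

Definition delayable (R : tss) (H : premises) (t : term) (a : Act) (u : term)
  (p : lit) : Prop :=
  match p with
  | Pos w b y =>
      exists (v : term) (z : V),
        ~ vars_rule H (Pos t a u) z /\
        exists H1 H2,
          Rbar R H1 (Pos t tau v) /\
          ntytt H2 (Pos v a u) /\ linearly_provable R H2 (Pos v a u) /\
          subset H1 (fun l => (H l /\ l <> p) \/ l = Pos w tau (Var z)) /\
          subset H2 (fun l => (H l /\ l <> p) \/ l = Pos (Var z) b y)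
  | Neg _ _ => False
  end.

Definition neg_stable (H : premises) : Prop :=
  forall w g, H (Neg w g) -> H (Neg w tau).

Definition finite_set (A : premises) : Prop :=
  exists L : list lit, forall l, A l -> In l L.

Definition mdr_rule (R : tss) (H : premises) (c : lit) : Prop :=
  match c with
  | Pos t a u =>
      neg_stable H /\
      exists Hd : premises,
        finite_set Hd /\
        (forall l, Hd l -> H l /\ is_pos l /\ delayable R H t a u l) /\
        forall M : premises,
          (forall l, M l -> H l /\ is_pos l /\ ~ Hd l /\ ~ HLam H c l) ->
          forall zf, admissible H c M zf ->
          exists HM, Rbar R HM (Pos t a u) /\ subset HM (polled H M zf)
  | Neg _ _ => False
  end.

Definition mdr_tss (R : tss) : Prop :=
  standard_decent_ntyft R /\ forall H c, R H c -> mdr_rule R H c.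

Definition tau_pollable (R : tss) : Prop :=
  (forall H c, R H c -> ntytt H c) /\
  forall H c, R H c ->
    forall M : premises,
      (forall l, M l -> H l /\ is_pos l /\ ~ HLam H c l) ->
      forall zf, admissible H c M zf ->
      exists HM,
        subset HM (polled H M zf) /\
        match c with
        | Neg t a => Rbar R HM (Neg t a)
        | Pos t a u => Rbar R HM (Pos t a u) \/ exists w, Rbar R HM (Pos t tau w)
        end.

End TSS.

From Stdlib Require Import List Lia.
From Stdlib Require Import Classical ClassicalEpsilon FunctionalExtensionality PropExtensionality.

(* Fix a rule H/(t -a-> u) of P and the premises M to be polled.  We iterate over rules G/c
   in Rbar R with source t, each premise of which is a premise of H, possibly polled.  Delay
   resistance of G/c gives a finite set Hd of delayable premises: the premises of M outside Hd
   are polled at once by the delay-resistance clause, while a premise w -b-> y in Hd is traded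
   for w -tau-> z_y by the rule t -tau-> v witnessing its delayability, which turns the
   conclusion into a tau-transition.  Every step removes an unpolled premise of M, and after the
   first step these lie in a finite set, so the iteration ends with a rule all of whose premises
   are polled.  Decency of the rules keeps the z_y fresh throughout. *)

Arguments Var {F ar V} x.
Arguments Pos {Act F ar V} t a u.
Arguments subst {F ar V} s t.
Arguments occurs {F ar V} x t.
Arguments subst_lit {Act F ar V} s l.
Arguments occurs_lit {Act F ar V} x l.
Arguments lhs {Act F ar V} l.
Arguments is_pos {Act F ar V} l.
Arguments Rbar {Act F ar V} R H c.
Arguments vars_rule {Act F ar V} H c x.
Arguments rhs_var {Act F ar V} H y.
Arguments ntytt {Act F ar V} H c.
Arguments all_liquid {F ar V} Lam x t.
Arguments HLam {Act F ar V} Lam H c l.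
Arguments admissible {Act F ar V} H c M zf.
Arguments polled {Act} tau {F ar V} H M zf l.
Arguments subset {Act F ar V} A B.
Arguments finite_set {Act F ar V} A.
Arguments mdr_rule {Act} tau {F ar V} Lam R H c.
Arguments bijective {V} p.
Arguments standard_decent_ntyft {Act F ar V} R.

Section Renaming.
Context {Act F : Type} {ar : F -> nat} {V : Type}.
Variable tau : Act.
Variable Lam : forall f : F, Fin.t (ar f) -> Prop.
Notation term := (term F ar V).
Notation lit := (lit Act F ar V).
Notation premises := (premises Act F ar V).

Lemma premises_ext (A B : premises) : (forall l, A l <-> B l) -> A = B.
Proof.
  intro E. apply functional_extensionality; intro l. apply propositional_extensionality, E.
Qed.

Lemma subst_ext (s s' : V -> term) (t : term) :
  (forall x, occurs x t -> s x = s' x) -> subst s t = subst s' t.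
Proof.
  induction t as [x|f a IH]; simpl; intro E.
  - apply E; reflexivity.
  - f_equal; apply functional_extensionality; intro i.
    apply IH; intros x Hx; apply E; exists i; exact Hx.
Qed.

Lemma subst_comp (s s' : V -> term) (t : term) :
  subst s (subst s' t) = subst (fun x => subst s (s' x)) t.
Proof.
  induction t as [x|f a IH]; simpl; auto.
  f_equal; apply functional_extensionality; intro i; apply IH.
Qed.

Lemma subst_Var (t : term) : subst Var t = t.
Proof.
  induction t as [x|f a IH]; simpl; auto.
  f_equal; apply functional_extensionality; intro i; apply IH.
Qed.

Definition ren (p : V -> V) : V -> term := fun x => Var (p x).
Definition renl (p : V -> V) : lit -> lit := subst_lit (ren p).
Definition renP (p : V -> V) (A : premises) : premises :=
  fun l => exists l0, A l0 /\ l = renl p l0.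

Lemma lhs_renl p l : lhs (renl p l) = subst (ren p) (lhs l).
Proof. destruct l; reflexivity. Qed.

Lemma renl_comp p p' l : renl p (renl p' l) = renl (fun x => p (p' x)) l.
Proof. destruct l; unfold renl; simpl; rewrite ?subst_comp; reflexivity. Qed.

Lemma subst_ren_fix p t : (forall x, occurs x t -> p x = x) -> subst (ren p) t = t.
Proof.
  intro E. rewrite <- (subst_Var t) at 2. apply subst_ext.
  intros x Hx; unfold ren; rewrite E; auto.
Qed.

Lemma renl_fix p l : (forall x, occurs_lit x l -> p x = x) -> renl p l = l.
Proof.
  destruct l as [w b y|w b]; unfold renl; simpl; intro E;
    f_equal; apply subst_ren_fix; auto.
Qed.

Lemma subst_ren_Var p u y : subst (ren p) u = Var y -> exists y0, u = Var y0 /\ y = p y0.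
Proof. destruct u; simpl; intro E; [injection E; eauto | discriminate]. Qed.

Lemma vars_rule_lhs (H : premises) c x : occurs x (lhs c) -> vars_rule H c x.
Proof. intro O. left. destruct c; simpl; auto. Qed.

Lemma admissible_antitone (H : premises) c (M M' : premises) zf :
  subset M' M -> admissible H c M zf -> admissible H c M' zf.
Proof.
  intros S [Inj Fresh].
  assert (Rh : forall y, rhs_var M' y -> rhs_var M y)
    by (intros y [w [b My]]; exists w, b; apply S, My).
  split; auto.
Qed.

Definition no_free_vars (H : premises) (c : lit) : Prop :=
  forall x, vars_rule H c x -> occurs x (lhs c) \/ rhs_var H x.

Lemma renP_subset p A B : subset A B -> subset (renP p A) (renP p B).
Proof. intros S l [l0 [Al0 E]]. exists l0; auto. Qed.

Definition swap (z1 z2 x : V) : V :=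
  if excluded_middle_informative (x = z1) then z2
  else if excluded_middle_informative (x = z2) then z1 else x.

Lemma swap_involutive z1 z2 x : swap z1 z2 (swap z1 z2 x) = x.
Proof.
  unfold swap. repeat (destruct excluded_middle_informative; subst; try congruence).
Qed.

Lemma swap_bijective z1 z2 : bijective (swap z1 z2).
Proof. exists (swap z1 z2). split; intro; apply swap_involutive. Qed.

Lemma swap_l z1 z2 : swap z1 z2 z1 = z2.
Proof. unfold swap. destruct excluded_middle_informative; congruence. Qed.

Lemma swap_other z1 z2 x : x <> z1 -> x <> z2 -> swap z1 z2 x = x.
Proof.
  unfold swap. intros. repeat (destruct excluded_middle_informative; try congruence).
Qed.

Section Inverse.
Variables p q : V -> V.
Hypothesis qp : forall x, q (p x) = x.
Hypothesis pq : forall x, p (q x) = x.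

Lemma bijective_of_inverse : bijective p.
Proof. exists q; auto. Qed.

Lemma renl_K l : renl q (renl p l) = l.
Proof. rewrite renl_comp; apply renl_fix; auto. Qed.

Lemma renl_inj l l' : renl p l = renl p l' -> l = l'.
Proof. intro E. rewrite <- (renl_K l), E. apply renl_K. Qed.

Lemma renP_renl A l : renP p A (renl p l) <-> A l.
Proof.
  split; [|intro Al; exists l; auto].
  intros [l0 [Al0 E]]. apply renl_inj in E. subst; auto.
Qed.

Lemma renP_K A : renP q (renP p A) = A.
Proof.
  apply premises_ext; intro l. split.
  - intros [l0 [[l1 [Al1 E1]] E0]]. subst. rewrite renl_K; auto.
  - intro Al. exists (renl p l). split; [exists l; auto | symmetry; apply renl_K].
Qed.

Lemma occurs_ren x t : occurs x (subst (ren p) t) <-> occurs (q x) t.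
Proof.
  induction t as [y|f a IH]; simpl.
  - split; intro E; subst; auto.
  - split; intros [i Hi]; exists i; apply IH; auto.
Qed.

Lemma occurs_lit_ren x l : occurs_lit x (renl p l) <-> occurs_lit (q x) l.
Proof. destruct l; simpl; rewrite ?occurs_ren; tauto. Qed.

Lemma all_liquid_ren x t : all_liquid Lam x (subst (ren p) t) <-> all_liquid Lam (q x) t.
Proof.
  induction t as [y|f a IH]; simpl; [tauto|].
  split; intros L i; destruct (L i) as [L1 L2]; rewrite occurs_ren, IH in *; auto.
Qed.

Lemma vars_rule_ren H c x : vars_rule (renP p H) (renl p c) x <-> vars_rule H c (q x).
Proof.
  unfold vars_rule. rewrite occurs_lit_ren. split.
  - intros [O | [l [[l0 [Hl0 E]] O]]]; auto. subst.
    rewrite occurs_lit_ren in O. eauto.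
  - intros [O | [l [Hl O]]]; auto. right.
    exists (renl p l). rewrite renP_renl, occurs_lit_ren; auto.
Qed.

Lemma rhs_var_ren H x : rhs_var (renP p H) x <-> rhs_var H (q x).
Proof.
  unfold rhs_var. split.
  - intros [w [b [l0 [Hl0 E]]]].
    destruct l0 as [w0 b0 u0|]; simpl in E; [injection E|discriminate].
    intros Eu _ _. symmetry in Eu. apply subst_ren_Var in Eu.
    destruct Eu as [y0 [-> ->]]. rewrite qp; eauto.
  - intros [w [b Hl]]. exists (subst (ren p) w), b.
    replace x with (p (q x)) by auto. exact (proj2 (renP_renl _ _) Hl).
Qed.

Lemma HLam_ren H c l : HLam Lam (renP p H) (renl p c) (renl p l) <-> HLam Lam H c l.
Proof.
  unfold HLam. rewrite renP_renl, !lhs_renl. split; intros [Hl L]; split; auto.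
  - intros x O. rewrite <- (qp x) in O |- *. rewrite <- occurs_ren, <- all_liquid_ren.
    apply L, occurs_ren, O.
  - intros x O. rewrite occurs_ren, all_liquid_ren. apply L, occurs_ren, O.
Qed.

Lemma admissible_ren H c M zf :
  admissible H c M zf -> admissible (renP p H) (renl p c) (renP p M) (fun y => p (zf (q y))).
Proof.
  intros [Inj Fresh]. split.
  - intros y y' Ry Ry' E. rewrite rhs_var_ren in Ry, Ry'.
    rewrite <- (pq y), <- (pq y'). f_equal.
    apply Inj; auto. rewrite <- (qp (zf (q y))), E. apply qp.
  - intros y Ry. rewrite rhs_var_ren in Ry. rewrite vars_rule_ren, qp. auto.
Qed.

Lemma polled_ren H M zf :
  subset (renP p (polled tau H M zf))
         (polled tau (renP p H) (renP p M) (fun y => p (zf (q y)))).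
Proof.
  intros l [l0 [Pl0 ->]]. destruct Pl0 as [[Hl0 NMl0] | [w [b [y [My ->]]]]].
  - left. rewrite !renP_renl. auto.
  - right. exists (subst (ren p) w), b, (p y). split.
    + exact (proj2 (renP_renl M (Pos w b (Var y))) My).
    + simpl. rewrite qp. reflexivity.
Qed.

Lemma no_free_vars_ren H c : no_free_vars H c -> no_free_vars (renP p H) (renl p c).
Proof.
  intros D x Vx. rewrite vars_rule_ren in Vx.
  rewrite lhs_renl, occurs_ren, rhs_var_ren. auto.
Qed.

End Inverse.

Lemma renP_comp p p' A : renP p (renP p' A) = renP (fun x => p (p' x)) A.
Proof.
  apply premises_ext; intro l. split.
  - intros [l1 [[l0 [Al0 ->]] ->]]. exists l0. rewrite renl_comp; auto.
  - intros [l0 [Al0 ->]]. exists (renl p' l0). rewrite renl_comp. split; auto. exists l0; auto.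
Qed.

Lemma renP_id A : renP (fun x => x) A = A.
Proof.
  apply premises_ext; intro l. split.
  - intros [l0 [Al0 ->]]. rewrite (renl_fix (fun x => x)); auto.
  - intro Al. exists l. rewrite (renl_fix (fun x => x)); auto.
Qed.

Section DelayResistance.
Variable R : tss Act F ar V.

Lemma Rbar_inv G c : Rbar R G c ->
  exists H0 c0 p, R H0 c0 /\ bijective p /\ G = renP p H0 /\ c = renl p c0.
Proof.
  intros [H0 [c0 [p [RH [Bp [Ec EG]]]]]].
  exists H0, c0, p. repeat split; auto. apply premises_ext, EG.
Qed.

Lemma Rbar_refl H c : R H c -> Rbar R H c.
Proof.
  intro RH. exists H, c, (fun x => x). split; [auto | split; [exists (fun x => x); auto |]].
  split; [symmetry; apply (renl_fix (fun x => x)); auto |].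
  intro l. change (H l <-> renP (fun x => x) H l). rewrite renP_id. tauto.
Qed.

Lemma Rbar_ren s G c : bijective s -> Rbar R G c -> Rbar R (renP s G) (renl s c).
Proof.
  intros [s' [s's ss']] RG.
  destruct (Rbar_inv _ _ RG) as [H0 [c0 [p [RH [[p' [p'p pp']] [-> ->]]]]]].
  exists H0, c0, (fun x => s (p x)). split; [auto | split; [|split]].
  - exists (fun y => p' (s' y)). split; intro; rewrite ?s's, ?p'p, ?pp', ?ss'; auto.
  - apply renl_comp.
  - intro l. change (renP s (renP p H0) l <-> renP (fun x => s (p x)) H0 l).
    rewrite renP_comp. tauto.
Qed.

(* Manifest delay resistance without what pollability does not use (negative stability and the
   rule for v -a-> u in a delayability witness), and stated for any rule so that it can be
   transported along renamings to all of Rbar R. *)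
Definition tau_delayable (G : premises) (c l : lit) : Prop :=
  exists w b y, l = Pos w b y /\ exists v z, ~ vars_rule G c z /\
    exists H1, Rbar R H1 (Pos (lhs c) tau v) /\
      subset H1 (fun k => (G k /\ k <> l) \/ k = Pos w tau (Var z)).

Definition pollable_outside (G : premises) (c : lit) (Hd : premises) : Prop :=
  forall M : premises,
    (forall l, M l -> G l /\ is_pos l /\ ~ Hd l /\ ~ HLam Lam G c l) ->
    forall zf, admissible G c M zf ->
    exists HM, Rbar R HM c /\ subset HM (polled tau G M zf).

Definition tau_delay_resistant (G : premises) (c : lit) : Prop :=
  exists Hd, finite_set Hd /\ (forall l, Hd l -> G l /\ tau_delayable G c l) /\
    pollable_outside G c Hd.

Lemma mdr_rule_tau_delay_resistant H c : mdr_rule tau Lam R H c -> tau_delay_resistant H c.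
Proof.
  destruct c as [t a u|]; simpl; [|tauto].
  intros [_ [Hd [Fin [Del Poll]]]]. exists Hd. split; [auto | split; auto].
  intros l Hdl. destruct (Del l Hdl) as [Hl [_ D]]. split; auto.
  destruct l as [w b y|]; [|contradiction].
  destruct D as [v [z [Nz [H1 [H2 [RH1 [_ [_ [S1 _]]]]]]]]].
  exists w, b, y. split; auto. exists v, z. split; auto. exists H1. auto.
Qed.

Section Transport.
Variables p q : V -> V.
Hypothesis qp : forall x, q (p x) = x.
Hypothesis pq : forall x, p (q x) = x.

Lemma tau_delayable_ren G c l :
  tau_delayable G c l -> tau_delayable (renP p G) (renl p c) (renl p l).
Proof.
  intros [w [b [y [-> [v [z [Nz [H1 [RH1 S1]]]]]]]]].
  exists (subst (ren p) w), b, (subst (ren p) y). split; [reflexivity|].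
  exists (subst (ren p) v), (p z). split.
  - rewrite (vars_rule_ren _ _ qp pq), qp. exact Nz.
  - exists (renP p H1). split.
    + rewrite lhs_renl. exact (Rbar_ren _ _ _ (bijective_of_inverse _ _ qp pq) RH1).
    + intros k [k0 [H1k0 ->]]. destruct (S1 k0 H1k0) as [[Gk0 Nk0] | ->].
      * left. rewrite (renP_renl _ _ qp). split; auto.
        intro E. apply Nk0, (renl_inj _ _ qp), E.
      * right. reflexivity.
Qed.

Lemma pollable_outside_ren G c Hd :
  pollable_outside G c Hd -> pollable_outside (renP p G) (renl p c) (renP p Hd).
Proof.
  intros Poll M HM zf Adm.
  set (M0 := renP q M). set (zf0 := fun y => q (zf (p y))).
  assert (EM : M = renP p M0) by (symmetry; apply (renP_K _ _ pq)).
  assert (Ezf : zf = fun y => p (zf0 (q y)))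
    by (apply functional_extensionality; intro y; unfold zf0; rewrite pq, pq; reflexivity).
  rewrite EM, Ezf in Adm |- *. clear Ezf.
  destruct (Poll M0) with (zf := zf0) as [HM0 [RHM0 SHM0]].
  - intros l M0l. assert (Ml : M (renl p l)) by (rewrite EM; apply (renP_renl _ _ qp); auto).
    destruct (HM _ Ml) as [Gl [Pl [NHd NHL]]].
    rewrite (renP_renl _ _ qp) in Gl, NHd. rewrite (HLam_ren _ _ qp pq) in NHL.
    split; [auto | split; [destruct l; auto | auto]].
  - apply (admissible_ren _ _ pq qp) in Adm.
    rewrite !(renP_K _ _ qp), (renl_K _ _ qp) in Adm.
    replace (fun y => q (p (zf0 (q (p y))))) with zf0 in Adm; auto.
    apply functional_extensionality; intro y. rewrite !qp. reflexivity.
  - exists (renP p HM0). split.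
    + exact (Rbar_ren _ _ _ (bijective_of_inverse _ _ qp pq) RHM0).
    + intros l Hl. apply (polled_ren _ _ qp). exact (renP_subset _ _ _ SHM0 _ Hl).
Qed.

Lemma tau_delay_resistant_ren G c :
  tau_delay_resistant G c -> tau_delay_resistant (renP p G) (renl p c).
Proof.
  intros [Hd [[L HL] [Del Poll]]]. exists (renP p Hd). split; [|split].
  - exists (map (renl p) L). intros l [l0 [Hdl0 ->]]. apply in_map, HL, Hdl0.
  - intros l [l0 [Hdl0 ->]]. destruct (Del l0 Hdl0) as [Gl0 D].
    rewrite (renP_renl _ _ qp). split; auto. apply tau_delayable_ren, D.
  - apply pollable_outside_ren, Poll.
Qed.
End Transport.

Lemma Rbar_tau_delay_resistant :
  (forall H c, R H c -> mdr_rule tau Lam R H c) ->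
  forall G c, Rbar R G c -> tau_delay_resistant G c.
Proof.
  intros MDR G c RG. destruct (Rbar_inv _ _ RG) as [H0 [c0 [p [RH [[q [qp pq]] [-> ->]]]]]].
  apply (tau_delay_resistant_ren _ _ qp pq), mdr_rule_tau_delay_resistant, MDR, RH.
Qed.

Lemma Rbar_no_free_vars :
  standard_decent_ntyft R -> forall G c, Rbar R G c -> no_free_vars G c.
Proof.
  intros SD G c RG. destruct (Rbar_inv _ _ RG) as [H0 [c0 [p [RH [[q [qp pq]] [-> ->]]]]]].
  apply (no_free_vars_ren _ _ qp pq). destruct (SD _ _ RH) as [_ [_ [D _]]]. exact D.
Qed.
End DelayResistance.
End Renaming.

Section Pollability.
Context {Act F : Type} {ar : F -> nat} {V : Type}.
Variable tau : Act.
Variable Lam : forall f : F, Fin.t (ar f) -> Prop.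
Variable R : tss Act F ar V.
Notation term := (term F ar V).
Notation lit := (lit Act F ar V).
Notation premises := (premises Act F ar V).

Hypothesis R_no_free_vars : forall G c, Rbar R G c -> no_free_vars G c.
Hypothesis R_delay_resistant : forall G c, Rbar R G c -> tau_delay_resistant tau Lam R G c.

Variables (H : premises) (t : term) (a : Act) (u : term).
Hypothesis RH : R H (Pos t a u).
Hypothesis ntytt_H : ntytt H (Pos t a u).
Variables (M : premises) (zf : V -> V).
Hypothesis M_sub : forall l, M l -> H l /\ is_pos l /\ ~ HLam Lam H (Pos t a u) l.
Hypothesis M_adm : admissible H (Pos t a u) M zf.

Lemma M_shape l : M l -> exists w b y, l = Pos w b (Var y).
Proof.
  intro Ml. destruct (M_sub l Ml) as [Hl [Pl _]].
  destruct l as [w b y|]; [|contradiction].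
  destruct (proj1 ntytt_H w b y Hl) as [v [-> _]]. eauto.
Qed.

Lemma M_rhs_unique w b w' b' y :
  M (Pos w b (Var y)) -> M (Pos w' b' (Var y)) -> Pos w b (Var y) = Pos w' b' (Var y).
Proof.
  intros M1 M2. destruct (proj2 ntytt_H w b w' b' y) as [-> ->]; auto;
    [apply M_sub, M1 | apply M_sub, M2].
Qed.

Lemma zf_not_in_M w b y : rhs_var M y -> ~ M (Pos w b (Var (zf y))).
Proof.
  intros Ry Ml. apply (proj2 M_adm y Ry). right.
  exists (Pos w b (Var (zf y))). split; [apply M_sub, Ml | simpl; auto].
Qed.

Definition target (c : lit) : Prop := c = Pos t a u \/ exists w, c = Pos t tau w.

Lemma lhs_target c : target c -> lhs c = t.
Proof. intros [-> | [w ->]]; reflexivity. Qed.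

(* Invariant of the iteration: premises of G still in M have not been polled yet. *)
Definition candidate (G : premises) (c : lit) : Prop :=
  Rbar R G c /\ target c /\ subset G (fun l => polled tau H M zf l \/ M l) /\
  admissible G c (fun l => G l /\ M l) zf.

Lemma candidate_polled G c N G' c' :
  candidate G c -> subset N (fun l => G l /\ M l) ->
  Rbar R G' c' -> target c' -> subset G' (polled tau G N zf) ->
  candidate G' c' /\ forall k, G' k -> M k -> G k /\ ~ N k.
Proof.
  intros [_ [Tc [SG [_ FreshG]]]] SN RG' Tc' SG'.
  assert (Back : forall k, G' k -> M k -> G k /\ ~ N k).
  { intros k G'k Mk. destruct (SG' k G'k) as [? | [w [b [y [Ny ->]]]]]; auto.
    exfalso. apply (zf_not_in_M w tau y); [exists w, b; apply SN, Ny | exact Mk]. }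
  split; [split; [auto | split; [auto | split]] | exact Back].
  - intros k G'k. destruct (SG' k G'k) as [[Gk _] | [w [b [y [Ny ->]]]]]; [auto|].
    left; right. exists w, b, y. split; [apply SN, Ny | reflexivity].
  - split.
    + intros y y' [w [b [_ My]]] [w' [b' [_ My']]].
      apply (proj1 M_adm); [exists w, b | exists w', b']; auto.
    + intros y [w [b [G'l Ml]]] Vy. destruct (Back _ G'l Ml) as [Gl NNl].
      assert (FG : ~ vars_rule G c (zf y)) by (apply FreshG; exists w, b; auto).
      destruct (R_no_free_vars _ _ RG' _ Vy) as [O | [w3 [b3 G'3]]].
      * apply FG, vars_rule_lhs. rewrite (lhs_target _ Tc), <- (lhs_target _ Tc'). exact O.
      * destruct (SG' _ G'3) as [[G3 _] | [w4 [b4 [y4 [N4 E4]]]]].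
        -- apply FG. right. exists (Pos w3 b3 (Var (zf y))). simpl; auto.
        -- injection E4 as _ _ Ez.
           assert (y4 = y) as ->.
           { apply (proj1 M_adm); [exists w4, b4; apply SN, N4 | exists w, b | ]; auto. }
           apply NNl. rewrite (M_rhs_unique w b w4 b4 y Ml (proj2 (SN _ N4))). exact N4.
Qed.

Lemma candidate_poll G c Hd :
  candidate G c -> pollable_outside tau Lam R G c Hd ->
  exists G', candidate G' c /\ forall k, G' k -> M k -> G k /\ Hd k.
Proof.
  intros Cand Poll. pose proof Cand as [_ [Tc [_ AdmG]]].
  set (N := fun l => G l /\ M l /\ ~ Hd l).
  destruct (Poll N) with (zf := zf) as [G' [RG' SG']].
  - intros l [Gl [Ml NHd]]. destruct (M_sub l Ml) as [Hl [Pl NHL]].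
    repeat split; auto. intros [_ L]. apply NHL. split; auto.
    rewrite (lhs_target _ Tc) in L. exact L.
  - revert AdmG. apply admissible_antitone. intros l [Gl [Ml _]]; auto.
  - destruct (candidate_polled G c N G' c Cand) as [C' Back]; auto.
    + intros l [Gl [Ml _]]; auto.
    + exists G'. split; auto. intros k G'k Mk. destruct (Back k G'k Mk) as [Gk NN].
      split; auto. apply NNPP. intro NHd. apply NN. split; auto.
Qed.

Lemma candidate_delay G c l :
  candidate G c -> G l -> M l -> tau_delayable tau R G c l ->
  exists G' c', candidate G' c' /\ forall k, G' k -> M k -> G k /\ k <> l.
Proof.
  intros Cand Gl Ml [w [b [y0 [El [v [z [Nz [H1 [RH1 S1]]]]]]]]].
  destruct (M_shape l Ml) as [w' [b' [y ->]]]. injection El as -> -> <-.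
  pose proof Cand as [_ [Tc [_ [_ FreshG]]]].
  assert (Fy : ~ vars_rule G c (zf y)) by (apply FreshG; exists w, b; auto).
  (* z and z_y are both fresh for G/c, so swapping them fixes G/c. *)
  set (s := swap z (zf y)).
  assert (Fix : forall x, vars_rule G c x -> s x = x)
    by (intros x Vx; apply swap_other; intro; subst; auto).
  assert (Sub : subset (renP s H1) (polled tau G (fun k => k = Pos w b (Var y)) zf)).
  { intros k [k0 [H1k0 ->]]. destruct (S1 k0 H1k0) as [[Gk0 Nk0] | ->].
    - left. rewrite renl_fix; [auto|]. intros x O. apply Fix. right. exists k0; auto.
    - right. exists w, b, y. split; [reflexivity|]. unfold renl; simpl.
      rewrite subst_ren_fix.
      + unfold ren, s. rewrite swap_l. reflexivity.
      + intros x O. apply Fix. right. exists (Pos w b (Var y)). simpl; auto. }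
  set (c' := Pos t tau (subst (ren s) v)).
  assert (RG' : Rbar R (renP s H1) c').
  { rewrite (lhs_target _ Tc) in RH1.
    pose proof (Rbar_ren R s _ _ (swap_bijective z (zf y)) RH1) as R'.
    unfold renl in R'; simpl in R'. rewrite subst_ren_fix in R'; [exact R'|].
    intros x O. apply Fix, vars_rule_lhs. rewrite (lhs_target _ Tc). exact O. }
  destruct (candidate_polled G c (fun k => k = Pos w b (Var y)) (renP s H1) c' Cand)
    as [C' Back]; auto.
  - intros k ->. auto.
  - right. exists (subst (ren s) v). reflexivity.
  - exists (renP s H1), c'. auto.
Qed.

Lemma candidate_step G c l :
  candidate G c -> G l -> M l ->
  exists G' c' l', candidate G' c' /\ G l' /\ M l' /\
    forall k, G' k -> M k -> G k /\ k <> l'.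
Proof.
  intros Cand Gl Ml. destruct (R_delay_resistant _ _ (proj1 Cand)) as [Hd [_ [Del Poll]]].
  destruct (classic (exists q, G q /\ M q /\ ~ Hd q)) as [[q [Gq [Mq NHd]]] | AllHd].
  - destruct (candidate_poll G c Hd Cand Poll) as [G' [C' Back]].
    exists G', c, q. split; [auto | split; [auto | split; [auto |]]].
    intros k G'k Mk. destruct (Back k G'k Mk) as [Gk Hdk].
    split; [auto | intros ->; auto].
  - assert (Hdl : Hd l) by (apply NNPP; intro; apply AllHd; eauto).
    destruct (candidate_delay G c l Cand Gl Ml (proj2 (Del l Hdl))) as [G' [c' [C' Back]]].
    exists G', c', l. auto.
Qed.

Lemma candidate_polled_rule n : forall L G c,
  length L < n -> candidate G c -> (forall l, G l -> M l -> In l L) ->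
  exists G' c', Rbar R G' c' /\ target c' /\ subset G' (polled tau H M zf).
Proof.
  induction n as [|n IH]; intros L G c Hlen Cand HL; [inversion Hlen|].
  destruct (classic (exists l, G l /\ M l)) as [[l [Gl Ml]] | NoM].
  - destruct (candidate_step G c l Cand Gl Ml) as [G' [c' [l' [C' [Gl' [Ml' Back]]]]]].
    destruct (in_split l' L (HL l' Gl' Ml')) as [L1 [L2 ->]].
    apply (IH (L1 ++ L2) G' c'); auto.
    + rewrite length_app in *. simpl in Hlen. lia.
    + intros k G'k Mk. destruct (Back k G'k Mk) as [Gk Nk].
      specialize (HL k Gk Mk). apply in_app_or in HL. apply in_or_app.
      destruct HL as [? | [? | ?]]; auto. congruence.
  - destruct Cand as [RG [Tc [SG _]]]. exists G, c. repeat split; auto.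
    intros k Gk. destruct (SG k Gk); [auto | exfalso; eauto].
Qed.

Lemma polled_rule_exists :
  exists G c, Rbar R G c /\ target c /\ subset G (polled tau H M zf).
Proof.
  assert (Cand : candidate H (Pos t a u)).
  { split; [apply Rbar_refl, RH | split; [left; reflexivity | split]].
    - intros l Hl. destruct (classic (M l)); [right | left; left]; auto.
    - apply (admissible_antitone _ _ _ _ _ (fun l Hl => proj2 Hl) M_adm). }
  (* M may be infinite; one polling step confines its remaining premises to the finite Hd. *)
  destruct (R_delay_resistant _ _ (proj1 Cand)) as [Hd [[Ld HLd] [_ Poll]]].
  destruct (candidate_poll _ _ Hd Cand Poll) as [G0 [C0 Back0]].
  apply (candidate_polled_rule (S (length Ld)) Ld G0 (Pos t a u)); auto.
  intros l G0l Ml. apply HLd, (Back0 l G0l Ml).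
Qed.
End Pollability.

Theorem mainTheorem10
  (Act : Type) (tau : Act) (F : Type) (ar : F -> nat) (V : Type)
  (V_infinite : forall L : list V, exists x : V, ~ In x L)
  (Lam : forall f : F, Fin.t (ar f) -> Prop)
  (R : tss Act F ar V) :
  mdr_tss Act tau F ar V Lam R -> tau_pollable Act tau F ar V Lam R.
Proof.
  (* The fresh variables z_y are supplied by zf. *)
  intros [SD MDR]. split.
  - intros H c Hc. apply (SD H c Hc).
  - intros H c Hc M HM zf Adm. destruct (SD H c Hc) as [Pc [[NT _] _]].
    destruct c as [t a u|]; [|contradiction].
    destruct (polled_rule_exists tau Lam R (Rbar_no_free_vars R SD)
                (Rbar_tau_delay_resistant tau Lam R MDR) H t a u Hc NT M zf HM Adm)
      as [G [c [RG [[-> | [w ->]] SG]]]]; exists G; eauto.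
Qed.
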